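(* Let $q\in\mathbb{N}$ be odd and square-free. Then if $Q$ is an integral ternary quadratic form with $\gcd(\det(Q),q)=1$ we have \[m(Q;q)\ll q^{1/2}\,\widehat{m}(-Q^{\mathrm{adj}};q)^{1/2},\] with an absolute implied constant. In particular one has \[B_3^*(q)\ll q^{1/2}\,\widehat{B}_3(q)^{1/2}.\]
   Context: $\|\cdot\|$ is the Euclidean norm. Since $q$ is odd, an integral quadratic form $Q$ in $n$ variables is represented modulo $q$ by a symmetric integer matrix $M$ (so $Q(\mathbf{x})\equiv\mathbf{x}^TM\mathbf{x}\pmod q$); $\det(Q)$ means $\det(M)$, and $Q^{\mathrm{adj}}$ denotes the quadratic form with matrix the adjugate matrix of $M$, so $-Q^{\mathrm{adj}}$ is the form $\mathbf{y}\mapsto-\mathbf{y}^T\mathrm{adj}(M)\mathbf{y}$. Define $m(Q;q):=\min\{\|\mathbf{x}\|:\ \mathbf{x}\in\mathbb{Z}^n\setminus\{\mathbf{0}\},\ Q(\mathbf{x})\equiv0\pmod q\}$ and $\widehat{m}(Q;q):=\min\{\|\mathbf{x}\|:\ \mathbf{x}\in\mathbb{Z}^n\setminus\{\mathbf{0}\},\ \exists t\in\mathbb{Z},\ Q(\mathbf{x})\equiv t^2\pmod q\}$. Define $B_3^*(q):=\max_Q m(Q;q)$ over integral ternary forms $Q$ with $\gcd(\det(Q),q)=1$, and $\widehat{B}_n(q):=\max_Q\widehat{m}(Q;q)$ over integral quadratic forms $Q$ in $n$ variables with $\gcd(\det(Q),q)=1$. *)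

From HB Require Import structures.
From mathcomp Require Import all_boot all_order all_algebra.
From mathcomp Require Import all_classical all_reals.
Set Implicit Arguments. Unset Strict Implicit. Unset Printing Implicit Defensive.
Import Order.TTheory GRing.Theory Num.Theory.
Local Open Scope classical_set_scope.
Local Open Scope ring_scope.

Definition squarefree (q : nat) : Prop :=
  forall p : nat, prime p -> ~~ (p * p %| q)%N.

Definition qform (M : 'M[int]_3) (x : 'cV[int]_3) : int := (x^T *m M *m x) 0 0.

Definition sqnorm (x : 'cV[int]_3) : int := \sum_(i < 3) (x i 0) ^+ 2.

Definition enorm (R : realType) (x : 'cV[int]_3) : R := Num.sqrt ((sqnorm x)%:~R).

Definition mQ (R : realType) (M : 'M[int]_3) (q : nat) : R :=
  inf [set enorm R x | x in [set x : 'cV[int]_3 | x != 0 /\ (q%:Z %| qform M x)%Z]].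

Definition mhatQ (R : realType) (M : 'M[int]_3) (q : nat) : R :=
  inf [set enorm R x | x in [set x : 'cV[int]_3 |
         x != 0 /\ exists t : int, (q%:Z %| qform M x - t ^+ 2)%Z]].

Definition admissible (M : 'M[int]_3) (q : nat) : Prop :=
  M^T = M /\ coprime `|\det M|%N q.

Definition B3star (R : realType) (q : nat) : R :=
  sup [set mQ R M q | M in [set M : 'M[int]_3 | admissible M q]].

Definition B3hat (R : realType) (q : nat) : R :=
  sup [set mhatQ R M q | M in [set M : 'M[int]_3 | admissible M q]].

From HB Require Import structures.
From mathcomp Require Import all_boot all_order all_algebra.
From mathcomp Require Import all_classical all_reals.
From mathcomp Require Import ring zify lra.
Set Implicit Arguments. Unset Strict Implicit. Unset Printing Implicit Defensive.
Import Order.TTheory GRing.Theory Num.Theory.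

(* Let y be a shortest nonzero vector with -Q^adj(y) = t^2 mod q, and write
   y = g y' with y' primitive.  At a prime p | q some coordinate c = y'_i is
   prime to p, and two integral vectors u, v orthogonal to y' with
   u x v = c y' have Gram determinant c^2 Q^adj(y').  So on y'.x = 0 mod p
   the form c^2 Q is a binary form whose discriminant is minus a square mod p,
   and it vanishes mod p on a line.  Hence q | Q(x) as soon as y'.x = 0 and x
   satisfies one more congruence modulo each p | q (two when p | g, where x is
   simply taken to be 0 mod p).  The pigeonhole principle in a box of side H
   with H^2 ~ q |y| yields such an x <> 0, whence m(Q;q)^2 << q |y|. *)

Lemma prod_primes_dvd (ps : seq nat) (n : nat) : uniq ps ->
  {in ps, forall p, prime p && (p %| n)} -> \prod_(p <- ps) p %| n.
Proof.
elim: ps => [|r ps IH] /=; first by rewrite big_nil dvd1n.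
case/andP=> rps ups hps; have /andP [pr rn] := hps r (mem_head _ _).
rewrite big_cons Gauss_dvd ?rn ?IH // => [p hp|]; first by apply: hps; rewrite in_cons hp orbT.
rewrite prime_coprime // Euclid_dvd_prod // big_has; apply/hasP => -[p hp].
have /andP [pp _] : prime p && (p %| n) by apply: hps; rewrite in_cons hp orbT.
by rewrite dvdn_prime2 // => /eqP rp; move: rps; rewrite rp hp.
Qed.

Lemma prod_primes_leq (q n : nat) (P : pred nat) : 0 < n ->
  {in primes q, forall p, P p -> p %| n} -> \prod_(p <- primes q | P p) p <= n.
Proof.
move=> n0 hP; apply: dvdn_leq => //; rewrite -big_filter; apply: prod_primes_dvd.
  by rewrite filter_uniq // primes_uniq.
move=> p; rewrite mem_filter => /andP [Pp pq]; rewrite hP // andbT.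
by move: pq; rewrite mem_primes => /andP [].
Qed.

Lemma squarefree_gt0 (q : nat) : squarefree q -> 0 < q.
Proof. by case: q => // sf; have := sf 2 isT. Qed.

Lemma squarefree_dvd (q n : nat) : squarefree q ->
  {in primes q, forall p, p %| n} -> q %| n.
Proof.
move=> sf hq; have q0 := squarefree_gt0 sf; apply/dvdn_partP => // p pq.
have pp : prime p by move: pq; rewrite mem_primes => /andP [].
have log1 : logn p q = 1.
  apply/eqP; rewrite eqn_leq logn_gt0 pq andbT leqNgt.
  by rewrite -(pfactor_dvdn 2 pp q0) -mulnn; apply: sf.
by rewrite p_part log1 expn1; apply: hq.
Qed.

Lemma exists_sqr_between (N : nat) : 0 < N -> exists H, N <= H * H <= 4 * N.
Proof.
move=> N0; have exH : exists n, N <= n * n by exists N; rewrite leq_pmulr.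
case: (ex_minnP exH) => H hH hmin; exists H; rewrite hH /=.
case: H hH hmin => [|[|h]] hH hmin; [lia | lia |].
have : ~~ (N <= h.+1 * h.+1) by apply/negP => /hmin; lia.
nia.
Qed.

Lemma box_count (S' g q H P1 P2 : nat) : 0 < S' -> P1 <= q -> P2 <= g ->
  3 * (S' * g) * q <= H * H -> (2 * (S' * H)).+1 * (P1 * P2) < H.+1 ^ 3.
Proof.
move=> S1 P1q P2g hH.
have step1 : (2 * (S' * H)).+1 * (P1 * P2) <= (2 * (S' * H)).+1 * (q * g).
  by apply: leq_mul => //; apply: leq_mul.
have [q0|q_gt0] := posnP q; first by move: step1; rewrite q0 mul0n muln0; lia.
have [g0|g_gt0] := posnP g; first by move: step1; rewrite g0 !muln0; lia.
have H1 : 0 < H by nia.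
have : (2 * (S' * H)).+1 * (q * g) <= H * H * H by nia.
rewrite expnS expnS expn1; nia.
Qed.

Local Open Scope ring_scope.

Lemma prime_dvdzM (p : nat) (a b : int) : prime p ->
  (p%:Z %| a * b)%Z = (p%:Z %| a)%Z || (p%:Z %| b)%Z.
Proof. by move=> pp; rewrite !dvdzE abszM Euclid_dvdM. Qed.

Lemma prime_dvdzX2 (p : nat) (a : int) : prime p -> (p%:Z %| a ^+ 2)%Z = (p%:Z %| a)%Z.
Proof. by move=> pp; rewrite expr2 prime_dvdzM // orbb. Qed.

Lemma dvdz_lt_eq0 (m : nat) (z : int) : (`|z| < m)%N -> (m%:Z %| z)%Z -> z = 0.
Proof.
rewrite dvdzE /= => hz mz; have [z0|zp] := posnP `|z|; last by have := dvdn_leq zp mz; lia.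
by apply/eqP; rewrite -absz_eq0 z0.
Qed.

Definition binary_form (al be ga a b : int) : int :=
  al * a ^+ 2 + 2 * be * a * b + ga * b ^+ 2.

Lemma binary_form_isotropic_line (p : nat) (al be ga d s : int) : prime p ->
  ~~ (p%:Z %| d)%Z -> (p%:Z %| d ^+ 2 * (al * ga - be ^+ 2) + s ^+ 2)%Z ->
  exists l1 l2 : int, forall a b : int,
    (p%:Z %| l1 * a + l2 * b)%Z -> (p%:Z %| binary_form al be ga a b)%Z.
Proof.
move=> pp pd hdisc.
have [pal|npal] := boolP (p%:Z %| al)%Z.
  exists 0, 1 => a b; rewrite mul0r add0r mul1r => pb.
  have -> : binary_form al be ga a b = al * a ^+ 2 + b * (2 * be * a + ga * b).
    by rewrite /binary_form; ring.
  by rewrite rpredD ?dvdz_mulr.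
exists (d * al), (d * be - s) => a b pl.
set L := d * al * a + (d * be - s) * b in pl.
have factor : d ^+ 2 * al * binary_form al be ga a b
    = L * (L + 2 * s * b) + b ^+ 2 * (d ^+ 2 * (al * ga - be ^+ 2) + s ^+ 2).
  by rewrite /L /binary_form; ring.
have : (p%:Z %| d ^+ 2 * al * binary_form al be ga a b)%Z.
  by rewrite factor; apply: rpredD; [apply: dvdz_mulr | apply: dvdz_mull].
by rewrite -mulrA prime_dvdzM // prime_dvdzX2 // (negbTE pd) prime_dvdzM // (negbTE npal).
Qed.

(* Indices are plain [nat]s, mapped into ['I_3] by [inord]; they are only
   meaningful below 3. *)
Definition coord3 (x : 'cV[int]_3) (i : nat) : int := x (inord i) 0.
Definition entry3 (M : 'M[int]_3) (i j : nat) : int := M (inord i) (inord j).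
Definition unit3 (i : nat) : 'cV[int]_3 := \col_(l < 3) ((l : nat) == i)%:R.

Definition bform (M : 'M[int]_3) (u v : 'cV[int]_3) : int := (u^T *m M *m v) 0 0.
Definition dotv (u v : 'cV[int]_3) : int := (u^T *m v) 0 0.

Lemma coord3E (x : 'cV[int]_3) (i : 'I_3) (j : 'I_1) : x i j = coord3 x i.
Proof. by rewrite /coord3 inord_val ord1. Qed.

Lemma entry3E (M : 'M[int]_3) (i j : 'I_3) : M i j = entry3 M i j.
Proof. by rewrite /entry3 !inord_val. Qed.

Lemma coord3D u v l : coord3 (u + v) l = coord3 u l + coord3 v l.
Proof. by rewrite /coord3 mxE. Qed.

Lemma coord3N u l : coord3 (- u) l = - coord3 u l.
Proof. by rewrite /coord3 mxE. Qed.

Lemma coord3Z (a : int) x l : coord3 (a *: x) l = a * coord3 x l.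
Proof. by rewrite /coord3 mxE. Qed.

Lemma coord3_unit3 i l : (l < 3)%N -> coord3 (unit3 i) l = (l == i)%:R.
Proof. by move=> hl; rewrite /coord3 mxE inordK. Qed.

Lemma entry3_sym (M : 'M[int]_3) i j : M^T = M -> entry3 M i j = entry3 M j i.
Proof. by move=> sM; rewrite /entry3 -{1}sM mxE. Qed.

Ltac sym_entries sM :=
  rewrite ?(entry3_sym 1 0 sM) ?(entry3_sym 2 0 sM) ?(entry3_sym 2 1 sM).

Lemma bform3E M u v : bform M u v =
    coord3 u 0 * entry3 M 0 0 * coord3 v 0 + coord3 u 0 * entry3 M 0 1 * coord3 v 1
  + coord3 u 0 * entry3 M 0 2 * coord3 v 2 + coord3 u 1 * entry3 M 1 0 * coord3 v 0
  + coord3 u 1 * entry3 M 1 1 * coord3 v 1 + coord3 u 1 * entry3 M 1 2 * coord3 v 2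
  + coord3 u 2 * entry3 M 2 0 * coord3 v 0 + coord3 u 2 * entry3 M 2 1 * coord3 v 1
  + coord3 u 2 * entry3 M 2 2 * coord3 v 2.
Proof.
have -> : bform M u v = \sum_(i < 3) \sum_(j < 3) coord3 u i * entry3 M i j * coord3 v j.
  rewrite /bform !mxE exchange_big; apply: eq_bigr => j _.
  rewrite !mxE big_distrl; apply: eq_bigr => i _.
  by rewrite !mxE coord3E entry3E coord3E.
by rewrite !big_ord_recl !big_ord0 /=; ring.
Qed.

Lemma dotv3E u v :
  dotv u v = coord3 u 0 * coord3 v 0 + coord3 u 1 * coord3 v 1 + coord3 u 2 * coord3 v 2.
Proof.
rewrite /dotv mxE !big_ord_recl big_ord0 /= !mxE !coord3E; ring.
Qed.

Lemma sqnorm3E x : sqnorm x = coord3 x 0 ^+ 2 + coord3 x 1 ^+ 2 + coord3 x 2 ^+ 2.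
Proof. by rewrite /sqnorm !big_ord_recl big_ord0 /= !coord3E; ring. Qed.

Lemma qformZ M (a : int) x : qform M (a *: x) = a ^+ 2 * qform M x.
Proof. by rewrite /qform -!/(bform _ _ _) !bform3E !coord3Z; ring. Qed.

Lemma qformN M x : qform (- M) x = - qform M x.
Proof. by rewrite /qform mulmxN mulNmx mxE. Qed.

Lemma qform_dvd (M : 'M[int]_3) (d : int) x :
  (forall l, (l < 3)%N -> (d %| coord3 x l)%Z) -> (d %| qform M x)%Z.
Proof.
move=> dx; rewrite /qform -/(bform _ _ _) bform3E.
by repeat apply: rpredD; apply: dvdz_mulr; apply: dvdz_mulr; apply: dx.
Qed.

Lemma dotvDl a u b v x : dotv (a *: u + b *: v) x = a * dotv u x + b * dotv v x.
Proof. by rewrite !dotv3E !coord3D !coord3Z; ring. Qed.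

Lemma dotvBr u x1 x2 : dotv u (x1 - x2) = dotv u x1 - dotv u x2.
Proof. by rewrite !dotv3E !coord3D !coord3N; ring. Qed.

Lemma dotv_unit3 l x : (l < 3)%N -> dotv (unit3 l) x = coord3 x l.
Proof. by rewrite dotv3E; case: l => [|[|[|//]]] _; rewrite !coord3_unit3 //=; ring. Qed.

Definition cyc3 (i : nat) : nat := match i with 0 => 1 | 1 => 2 | _ => 0 end%N.

Lemma cyc3_lt3 i : (cyc3 i < 3)%N.
Proof. by case: i => [|[|]]. Qed.

Lemma cyc3_cover i l : (i < 3)%N -> (l < 3)%N ->
  [|| l == i, l == cyc3 i | l == cyc3 (cyc3 i)].
Proof. by case: i => [|[|[|//]]] _; case: l => [|[|[|//]]]. Qed.

Lemma adj_entry3 (M : 'M[int]_3) i j : (i < 3)%N -> (j < 3)%N ->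
  entry3 (\adj M) i j =
    entry3 M (cyc3 j) (cyc3 i) * entry3 M (cyc3 (cyc3 j)) (cyc3 (cyc3 i))
  - entry3 M (cyc3 j) (cyc3 (cyc3 i)) * entry3 M (cyc3 (cyc3 j)) (cyc3 i).
Proof.
move=> hi hj; rewrite /entry3 mxE /cofactor (expand_det_row _ ord0).
rewrite !big_ord_recl big_ord0 /cofactor !det_mx11 !mxE !entry3E /=.
by case: i hi => [|[|[|//]]] _; case: j hj => [|[|[|//]]] _;
  rewrite /entry3 /= !inordK //=; ring.
Qed.

Lemma dotv_pivot y x i : (i < 3)%N -> dotv y x = coord3 y i * coord3 x i
  + coord3 y (cyc3 i) * coord3 x (cyc3 i) + coord3 y (cyc3 (cyc3 i)) * coord3 x (cyc3 (cyc3 i)).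
Proof. by rewrite dotv3E; case: i => [|[|[|//]]] _ /=; ring. Qed.

(* With c = y_i and (i, j, k) cyclic, u = c e_j - y_j e_i and v = c e_k - y_k e_i
   are orthogonal to y and u x v = c y. *)
Definition pivot_u (i : nat) (y : 'cV[int]_3) : 'cV[int]_3 :=
  coord3 y i *: unit3 (cyc3 i) - coord3 y (cyc3 i) *: unit3 i.
Definition pivot_v (i : nat) (y : 'cV[int]_3) : 'cV[int]_3 :=
  coord3 y i *: unit3 (cyc3 (cyc3 i)) - coord3 y (cyc3 (cyc3 i)) *: unit3 i.

Lemma pivot_gram (M : 'M[int]_3) (y : 'cV[int]_3) i : M^T = M -> (i < 3)%N ->
  qform M (pivot_u i y) * qform M (pivot_v i y) - bform M (pivot_u i y) (pivot_v i y) ^+ 2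
  = coord3 y i ^+ 2 * qform (\adj M) y.
Proof.
move=> sM hi; rewrite /qform -!/(bform _ _ _) !bform3E /pivot_u /pivot_v.
case: i hi => [|[|[|//]]] _;
  rewrite !(coord3D, coord3N, coord3Z) !coord3_unit3 // !adj_entry3 //=; sym_entries sM; ring.
Qed.

Lemma pivot_qform_binary (M : 'M[int]_3) (y x : 'cV[int]_3) i : M^T = M -> (i < 3)%N ->
  (dotv y x %| coord3 y i ^+ 2 * qform M x
     - binary_form (qform M (pivot_u i y)) (bform M (pivot_u i y) (pivot_v i y))
         (qform M (pivot_v i y)) (coord3 x (cyc3 i)) (coord3 x (cyc3 (cyc3 i))))%Z.
Proof.
move=> sM hi; apply/dvdzP.
(* c x = x_j u + x_k v + (y.x) e_i *)
exists (2 * bform M (coord3 x (cyc3 i) *: pivot_u i y + coord3 x (cyc3 (cyc3 i)) *: pivot_v i y)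
          (unit3 i) + dotv y x * entry3 M i i).
rewrite /binary_form /qform -!/(bform _ _ _) !bform3E /pivot_u /pivot_v !dotv3E.
case: i hi => [|[|[|//]]] _;
  rewrite !(coord3D, coord3N, coord3Z) !coord3_unit3 //=; sym_entries sM; ring.
Qed.

Lemma isotropic_sublattice_mod_prime (M : 'M[int]_3) (p : nat) (y : 'cV[int]_3)
    (g : nat) (t : int) :
  prime p -> M^T = M -> (exists2 i, (i < 3)%N & ~~ (p%:Z %| coord3 y i)%Z) ->
  (p%:Z %| g%:Z ^+ 2 * qform (\adj M) y + t ^+ 2)%Z ->
  exists l1 l2 : 'cV[int]_3, forall x : 'cV[int]_3,
    (p%:Z %| dotv y x)%Z -> (p%:Z %| dotv l1 x)%Z ->
    ((if (p %| g)%N then p else 1%N)%:Z %| dotv l2 x)%Z -> (p%:Z %| qform M x)%Z.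
Proof.
move=> pp sM [i hi pyi] hA.
have j3 := cyc3_lt3 i; have k3 := cyc3_lt3 (cyc3 i).
case: ifP => [pg|npg].
  exists (unit3 (cyc3 i)), (unit3 (cyc3 (cyc3 i))) => x pyx.
  rewrite !dotv_unit3 // => pxj pxk.
  have pxi : (p%:Z %| coord3 x i)%Z.
    have : (p%:Z %| coord3 y i * coord3 x i)%Z.
      have -> : coord3 y i * coord3 x i = dotv y x - coord3 y (cyc3 i) * coord3 x (cyc3 i)
          - coord3 y (cyc3 (cyc3 i)) * coord3 x (cyc3 (cyc3 i)).
        by rewrite (dotv_pivot _ _ hi); ring.
      by rewrite !rpredB // dvdz_mull.
    by rewrite prime_dvdzM // (negbTE pyi).
  by apply: qform_dvd => l hl; case/or3P: (cyc3_cover hi hl) => /eqP ->.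
set u := pivot_u i y; set v := pivot_v i y.
have hdisc : (p%:Z %| g%:Z ^+ 2 * (qform M u * qform M v - bform M u v ^+ 2)
                 + (coord3 y i * t) ^+ 2)%Z.
  have -> : g%:Z ^+ 2 * (qform M u * qform M v - bform M u v ^+ 2) + (coord3 y i * t) ^+ 2
      = coord3 y i ^+ 2 * (g%:Z ^+ 2 * qform (\adj M) y + t ^+ 2).
    by rewrite /u /v pivot_gram //; ring.
  exact: dvdz_mull.
have pg : ~~ (p%:Z %| g%:Z)%Z by rewrite dvdzE /= npg.
have [l1 [l2 line]] := binary_form_isotropic_line pp pg hdisc.
exists (l1 *: unit3 (cyc3 i) + l2 *: unit3 (cyc3 (cyc3 i))), 0 => x pyx.
rewrite dotvDl !dotv_unit3 // => /line pF _.
have : (p%:Z %| coord3 y i ^+ 2 * qform M x)%Z.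
  rewrite -(subrK (binary_form (qform M u) (bform M u v) (qform M v)
                 (coord3 x (cyc3 i)) (coord3 x (cyc3 (cyc3 i)))) (_ * _)).
  by rewrite rpredD // (dvdz_trans pyx) // pivot_qform_binary.
by rewrite prime_dvdzM // prime_dvdzX2 // (negbTE pyi).
Qed.

Lemma isotropic_sublattice (M : 'M[int]_3) (q g : nat) (y : 'cV[int]_3) (t : int) :
  M^T = M -> (forall p, prime p -> exists2 i, (i < 3)%N & ~~ (p%:Z %| coord3 y i)%Z) ->
  (q%:Z %| g%:Z ^+ 2 * qform (\adj M) y + t ^+ 2)%Z ->
  exists L : nat -> 'cV[int]_3 * 'cV[int]_3, forall p, p \in primes q -> forall x,
    (p%:Z %| dotv y x)%Z -> (p%:Z %| dotv (L p).1 x)%Z ->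
    ((if (p %| g)%N then p else 1%N)%:Z %| dotv (L p).2 x)%Z -> (p%:Z %| qform M x)%Z.
Proof.
move=> sM prim hq.
have forms p : exists l : 'cV[int]_3 * 'cV[int]_3, p \in primes q -> forall x,
    (p%:Z %| dotv y x)%Z -> (p%:Z %| dotv l.1 x)%Z ->
    ((if (p %| g)%N then p else 1%N)%:Z %| dotv l.2 x)%Z -> (p%:Z %| qform M x)%Z.
  have [pq|] := boolP (p \in primes q); last by exists (0, 0).
  move: pq; rewrite mem_primes => /and3P [pp _ pdq]; rewrite -[(p %| q)%N]/(p%:Z %| q%:Z)%Z in pdq.
  have [l1 [l2 hl]] := isotropic_sublattice_mod_prime pp sM (prim p pp) (dvdz_trans pdq hq).
  by exists (l1, l2).
by have [L hL] := choice forms; exists L.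
Qed.

Lemma primitive_decomposition (y : 'cV[int]_3) : y != 0 ->
  exists2 g : nat, (0 < g)%N & exists2 y' : 'cV[int]_3, y = g%:Z *: y' &
    forall p, prime p -> exists2 i, (i < 3)%N & ~~ (p%:Z %| coord3 y' i)%Z.
Proof.
move=> y0; pose g := \big[gcdn/0%N]_(i < 3) absz (y i 0).
have gy i : (g %| absz (y i ord0))%N by exact: (biggcdn_inf i).
have g0 : (0 < g)%N.
  rewrite lt0n; apply: contra y0 => /eqP g0; apply/eqP/matrixP => i j.
  by move: (gy i); rewrite g0 dvd0n absz_eq0 mxE (ord1 j) => /eqP.
exists g => //; set y' := \col_i (y i ord0 %/ g%:Z)%Z.
have ey : y = g%:Z *: y'.
  by apply/matrixP => i j; rewrite ord1 !mxE mulrC divzK // dvdzE.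
exists y' => // p pp.
have [/forallP pall | /forallPn [i ni]] := boolP [forall i : 'I_3, p%:Z %| y' i ord0]%Z.
  have : (p * g %| g)%N.
    apply/dvdn_biggcdP => i _; rewrite ey mxE abszM mulnC /=.
    by apply: dvdn_mul => //; move: (pall i); rewrite dvdzE.
  by move/(dvdn_leq g0); rewrite -{2}(mul1n g) leq_pmul2r // leqNgt prime_gt1.
by exists i => //; rewrite /coord3 inord_val.
Qed.

Definition residues (m : nat) : seq int := [seq k%:Z | k <- iota 0 m].

Definition residue_seqs (ms : seq nat) : seq (seq int) :=
  foldr (fun m acc => [seq r :: rs | r <- residues m, rs <- acc]) [:: [::]] ms.

Lemma size_residue_seqs ms : size (residue_seqs ms) = (\prod_(m <- ms) m)%N.
Proof.
elim: ms => [|m ms IH]; first by rewrite big_nil.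
by rewrite big_cons /= size_allpairs IH size_map size_iota.
Qed.

Lemma mem_residues (m : nat) (z : int) : (0 < m)%N -> (z %% m%:Z)%Z \in residues m.
Proof.
move=> m0; have mz : m%:Z != 0 by rewrite eqz_nat -lt0n.
have := modz_ge0 z mz; have := ltz_mod z mz.
case: (z %% m%:Z)%Z => // k; rewrite ltz_nat => km _.
by apply: map_f; rewrite mem_iota.
Qed.

Lemma mem_residue_seqs (T : eqType) (cs : seq T) (m : T -> nat) (r : T -> int) :
  (forall c, c \in cs -> 0 < m c)%N ->
  [seq (r c %% (m c)%:Z)%Z | c <- cs] \in residue_seqs [seq m c | c <- cs].
Proof.
elim: cs => [|c cs IH] hm /=; first by rewrite mem_seq1.
apply: allpairs_f; first by apply: mem_residues; apply: hm; rewrite mem_head.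
by apply: IH => c' hc'; apply: hm; rewrite in_cons hc' orbT.
Qed.

Lemma box_pigeonhole (H : nat) (cs : seq (nat * 'cV[int]_3)) :
  (forall c, c \in cs -> 0 < c.1)%N -> (\prod_(c <- cs) c.1 < H.+1 ^ 3)%N ->
  exists x : 'cV[int]_3, [/\ x != 0, forall l, (l < 3)%N -> `|coord3 x l| <= H%:Z
     & forall c, c \in cs -> (c.1%:Z %| dotv c.2 x)%Z].
Proof.
move=> cs0 hcard.
pose pt (f : {ffun 'I_3 -> 'I_H.+1}) : 'cV[int]_3 := \col_i (f i : nat)%:Z.
pose res f := [seq (dotv c.2 (pt f) %% c.1%:Z)%Z | c <- cs].
have /injectivePn [f1 [f2 nf12 e12]] : ~~ injectiveb res.
  apply/negP => /injectiveP inj.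
  have u : uniq (map res (enum {ffun 'I_3 -> 'I_H.+1})) by rewrite map_inj_uniq // enum_uniq.
  have sub : {subset map res (enum {ffun 'I_3 -> 'I_H.+1}) <= residue_seqs [seq c.1 | c <- cs]}.
    by move=> _ /mapP [f _ ->]; apply: mem_residue_seqs.
  have := uniq_leq_size u sub.
  by rewrite size_map -cardE card_ffun !card_ord size_residue_seqs big_map leqNgt hcard.
exists (pt f1 - pt f2); split.
- apply: contra nf12; rewrite subr_eq0 => /eqP e; apply/eqP/ffunP => i; apply/val_inj.
  by move/matrixP/(_ i 0): e; rewrite !mxE => -[].
- move=> l hl; rewrite /coord3 !mxE.
  by case: (f1 (inord l)) (f2 (inord l)) => [a ha] [b hb] /=; rewrite ler_norml; lia.
- move=> c hc; rewrite dotvBr -eqz_mod_dvd.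
  by move/eq_in_map: e12 => /(_ c hc) ->.
Qed.

Definition l1norm (y : 'cV[int]_3) : nat :=
  (`|coord3 y 0| + `|coord3 y 1| + `|coord3 y 2|)%N.

Lemma l1normZ (g : nat) y : l1norm (g%:Z *: y) = (g * l1norm y)%N.
Proof. by rewrite /l1norm !coord3Z !abszM /= !mulnDr. Qed.

Lemma dotv_bound y x (H : nat) : (forall l, (l < 3)%N -> `|coord3 x l| <= H%:Z) ->
  `|dotv y x| <= (l1norm y * H)%N%:Z.
Proof.
move=> hx; rewrite dotv3E /l1norm !mulnDl !PoszD.
have hl l : (l < 3)%N -> `|coord3 y l * coord3 x l| <= (`|coord3 y l| * H)%N%:Z.
  by move=> hl; rewrite normrM PoszM abszE ler_wpM2l ?hx.
by apply: (le_trans (ler_normD _ _)); rewrite lerD ?hl //;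
  apply: (le_trans (ler_normD _ _)); rewrite lerD ?hl.
Qed.

Lemma sqnorm_bound x (H : nat) : (forall l, (l < 3)%N -> `|coord3 x l| <= H%:Z) ->
  sqnorm x <= (3 * (H * H))%N%:Z.
Proof.
move=> hx; have sq l : (l < 3)%N -> coord3 x l ^+ 2 <= (H * H)%N%:Z.
  by move=> hl; rewrite -real_normK ?num_real // PoszM expr2 ler_pM ?hx.
by rewrite sqnorm3E; have := sq 0%N isT; have := sq 1%N isT; have := sq 2%N isT; lia.
Qed.

Lemma small_isotropic_vector (M : 'M[int]_3) (q : nat) (y : 'cV[int]_3) (t : int) :
  squarefree q -> M^T = M -> y != 0 -> (q%:Z %| qform (- \adj M) y - t ^+ 2)%Z ->
  exists2 x : 'cV[int]_3, x != 0 /\ (q%:Z %| qform M x)%Z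
                        & sqnorm x <= (36 * (l1norm y * q))%N%:Z.
Proof.
move=> sf sM y0 hq; have q0 := squarefree_gt0 sf.
have [g g0 [y' ey prim]] := primitive_decomposition y0.
pose wn p := if (p %| g)%N then p else 1%N.
have hA : (q%:Z %| g%:Z ^+ 2 * qform (\adj M) y' + t ^+ 2)%Z.
  rewrite -rpredN; have -> : - (g%:Z ^+ 2 * qform (\adj M) y' + t ^+ 2)
      = qform (- \adj M) y - t ^+ 2 by rewrite ey qformN qformZ opprD.
  exact: hq.
have [L hL] := isotropic_sublattice sM prim hA.
have S'0 : (0 < l1norm y')%N.
  have [i i3 ni] := prim 2%N isT; rewrite /l1norm.
  have : coord3 y' i != 0 by apply: contraNneq ni => ->; rewrite dvdz0.
  by rewrite -absz_eq0; case: i i3 {ni} => [|[|[|//]]] _; lia.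
have [H /andP [hH1 hH2]] : exists H,
    (3 * (l1norm y' * g) * q <= H * H <= 4 * (3 * (l1norm y' * g) * q))%N.
  by apply: exists_sqr_between; rewrite !muln_gt0 S'0 g0 q0.
pose N := (l1norm y' * H)%N.
(* y'.x = 0 is imposed as a congruence modulo 2N + 1 > |y'.x|. *)
pose cs := ((2 * N).+1, y') :: [seq (p, (L p).1) | p <- primes q]
                              ++ [seq (wn p, (L p).2) | p <- primes q].
have cs0 c : c \in cs -> (0 < c.1)%N.
  have p0 p : p \in primes q -> (0 < p)%N by rewrite mem_primes => /and3P [/prime_gt0].
  rewrite in_cons mem_cat => /or3P [/eqP -> // | /mapP [p /p0 ? ->] | /mapP [p /p0 ? ->]] //=.
  by rewrite /wn; case: ifP.
have hcard : (\prod_(c <- cs) c.1 < H.+1 ^ 3)%N.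
  rewrite big_cons big_cat (big_map (fun p => (p, (L p).1)))
    (big_map (fun p => (wn p, (L p).2))) /=.
  apply: box_count S'0 _ _ hH1.
    by apply: prod_primes_leq => // p; rewrite mem_primes => /and3P [].
  by rewrite /wn -big_mkcond; apply: prod_primes_leq.
have [x [nx xH xcs]] := box_pigeonhole cs0 hcard.
have yx : dotv y' x = 0.
  apply: (dvdz_lt_eq0 _ (xcs _ (mem_head _ _))); rewrite /=.
  by have := dotv_bound y' xH; rewrite -/N; lia.
exists x; first split => //.
  rewrite dvdzE; apply: squarefree_dvd sf _ => p pq; rewrite -[p]/`|p%:Z|%N -dvdzE.
  apply: (hL p pq x); first by rewrite yx dvdz0.
    by apply: (xcs (p, (L p).1)); rewrite in_cons mem_cat (map_f (fun p => (p, _)) pq) orbT.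
  by apply: (xcs (wn p, (L p).2)); rewrite in_cons mem_cat (map_f (fun p => (wn p, _)) pq) !orbT.
by apply: (le_trans (sqnorm_bound xH)); rewrite ey l1normZ lez_nat; lia.
Qed.

Lemma coprime_det_adj n (A : 'M[int]_n.+1) (q : nat) :
  coprime `|\det A| q -> coprime `|\det (\adj A)| q.
Proof.
move=> cop; have [dA0 | dA0] := eqVneq (\det A) 0.
  by move: cop; rewrite dA0 {1}/coprime gcd0n => /eqP ->; rewrite coprimen1.
have : \det A * \det (\adj A) = \det A * \det A ^+ n.
  by rewrite -det_mulmx mul_mx_adj det_scalar exprS.
by move/(mulfI dA0) ->; rewrite abszX coprimeXl.
Qed.

Lemma admissible_neg_adj (M : 'M[int]_3) (q : nat) :
  admissible M q -> admissible (- \adj M) q.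
Proof.
case=> sM cop; split; first by rewrite linearN /= trmx_adj sM.
have -> : \det (- \adj M) = - \det (\adj M) by rewrite -scaleN1r detZ; ring.
by rewrite abszN coprime_det_adj.
Qed.

Local Open Scope classical_set_scope.

Section MinimalVectors.
Variables (R : realType) (q : nat).
Hypothesis q_gt0 : (0 < q)%N.

Let e := q%:Z *: unit3 0.

Let e_neq0 : e != 0.
Proof.
apply: contraTneq q_gt0 => /(congr1 (coord3^~ 0%N)); rewrite coord3Z coord3_unit3 //.
by rewrite /coord3 mxE mulr1 => /eqP; rewrite eqz_nat => /eqP ->.
Qed.

Let e_isotropic N : (q%:Z %| qform N e)%Z.
Proof. by rewrite qformZ expr2 -mulrA dvdz_mulr. Qed.

Let enorm_e : enorm R e = q%:R.
Proof.
rewrite /enorm sqnorm3E !coord3Z !coord3_unit3 //= !mulr0 !mulr1 expr0n /= !addr0.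
by rewrite rmorphXn sqrtr_sqr ger0_norm ?ler0z.
Qed.

Let enorm_lb (A : set 'cV[int]_3) : has_lbound [set enorm R x | x in A].
Proof. by exists 0 => _ [x _ <-]; apply: sqrtr_ge0. Qed.

Lemma mQ_le_enorm N x : x != 0 -> (q%:Z %| qform N x)%Z -> mQ R N q <= enorm R x.
Proof. by move=> x0 qx; apply: ge_inf; [exact: enorm_lb | exists x]. Qed.

Lemma mQ_ge0 N : 0 <= mQ R N q.
Proof.
apply: lb_le_inf; last by move=> _ [x _ <-]; apply: sqrtr_ge0.
by exists (enorm R e), e.
Qed.

Lemma mhatQ_lb N c :
  (forall x, x != 0 -> (exists t, q%:Z %| qform N x - t ^+ 2)%Z -> c <= enorm R x) ->
  c <= mhatQ R N q.
Proof.
move=> hc; apply: lb_le_inf; last by move=> _ [x [x0 hx] <-]; apply: hc.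
by exists (enorm R e), e => //; split => //; exists 0; rewrite expr0n subr0.
Qed.

Lemma mhatQ_ge0 N : 0 <= mhatQ R N q.
Proof. by apply: mhatQ_lb => x _ _; apply: sqrtr_ge0. Qed.

Lemma mhatQ_le_q N : mhatQ R N q <= q%:R.
Proof.
rewrite -enorm_e; apply: ge_inf; first exact: enorm_lb.
by exists e => //; split => //; exists 0; rewrite expr0n subr0.
Qed.

End MinimalVectors.

Lemma coord3_le_enorm (R : realType) y l : (l < 3)%N ->
  (`|coord3 y l|%N%:R : R) <= enorm R y.
Proof.
move=> hl; rewrite natr_absz intr_norm -sqrtr_sqr ler_sqrt ?ler0z ?sqnorm3E; last first.
  by rewrite !addr_ge0 ?sqr_ge0.
rewrite -rmorphXn ler_int.
have := sqr_ge0 (coord3 y 0); have := sqr_ge0 (coord3 y 1); have := sqr_ge0 (coord3 y 2).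
by case: l hl => [|[|[|//]]] _; lia.
Qed.

Lemma l1norm_le_enorm (R : realType) y : ((l1norm y)%:R : R) <= 3 * enorm R y.
Proof.
rewrite /l1norm !natrD.
have := coord3_le_enorm R y (isT : 0 < 3)%N; have := coord3_le_enorm R y (isT : 1 < 3)%N.
have := coord3_le_enorm R y (isT : 2 < 3)%N; lra.
Qed.

Lemma mQ_sqr_le (R : realType) (M : 'M[int]_3) (q : nat) : squarefree q -> M^T = M ->
  mQ R M q ^+ 2 <= 108 * q%:R * mhatQ R (- \adj M) q.
Proof.
move=> sf sM; have q0 := squarefree_gt0 sf; have qR : (0 : R) < q%:R by rewrite ltr0n.
suff : mQ R M q ^+ 2 / (108 * q%:R) <= mhatQ R (- \adj M) q.
  by rewrite ler_pdivrMr ?mulr_gt0 // mulrC.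
apply: mhatQ_lb => // y y0 [t ht]; rewrite ler_pdivrMr ?mulr_gt0 //.
have [x [x0 qx] hx] := small_isotropic_vector sf sM y0 ht.
have m0 := mQ_ge0 R q0 M.
have x2 : mQ R M q ^+ 2 <= (sqnorm x)%:~R.
  have sx : (0 : R) <= (sqnorm x)%:~R by rewrite ler0z sqnorm3E !addr_ge0 ?sqr_ge0.
  by rewrite -(sqr_sqrtr sx) lerXn2r ?nnegrE ?sqrtr_ge0 // (mQ_le_enorm R x0 qx).
have hyR : (sqnorm x)%:~R <= 36 * ((l1norm y)%:R * q%:R) :> R.
  by move: hx; rewrite -(ler_int R) => /le_trans; apply; rewrite -[X in X <= _]/(_%:R) !natrM.
have := l1norm_le_enorm R y; nra.
Qed.

Lemma mQ_le (R : realType) (M : 'M[int]_3) (q : nat) : squarefree q -> M^T = M ->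
  mQ R M q <= 11 * Num.sqrt q%:R * Num.sqrt (mhatQ R (- \adj M) q).
Proof.
move=> sf sM; have q0 := squarefree_gt0 sf.
have m0 := mQ_ge0 R q0 M; have h0 := mhatQ_ge0 R q0 (- \adj M).
have s108 : Num.sqrt (108 : R) <= 11.
  by rewrite -(ger0_norm (_ : (0 : R) <= 11)) // -sqrtr_sqr ler_sqrt //; lra.
rewrite -(ger0_norm m0) -sqrtr_sqr.
apply: (le_trans (_ : _ <= Num.sqrt (108 * q%:R * mhatQ R (- \adj M) q))).
  by rewrite ler_sqrt ?mulr_ge0 // mQ_sqr_le.
by rewrite !sqrtrM ?mulr_ge0 // !ler_wpM2r ?sqrtr_ge0.
Qed.

Local Close Scope classical_set_scope.

Theorem lemma1 (R : realType) :
  exists C : R, 0 < C /\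
    (forall (q : nat) (M : 'M[int]_3),
        odd q -> squarefree q -> admissible M q ->
        mQ R M q <= C * Num.sqrt (q%:R) * Num.sqrt (mhatQ R (- \adj M) q)) /\
    (forall q : nat, odd q -> squarefree q ->
        B3star R q <= C * Num.sqrt (q%:R) * Num.sqrt (B3hat R q)).
Proof.
(* The local argument works at p = 2 as well. *)
exists 11; split=> //; split=> [q M _ sf [sM _] | q _ sf]; first exact: mQ_le.
have q0 := squarefree_gt0 sf.
have hub : has_ubound [set mhatQ R M q | M in [set M | admissible M q]].
  by exists q%:R => _ [M _ <-]; apply: mhatQ_le_q.
apply: ge_sup.
  by exists (mQ R 1%:M q), 1%:M => //; split; [exact: trmx1 | rewrite det1 coprime1n].
move=> _ [M adm <-]; apply: (le_trans (mQ_le R sf adm.1)).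
have hM : mhatQ R (- \adj M) q <= B3hat R q.
  by apply: (ub_le_sup hub); exists (- \adj M) => //; apply: admissible_neg_adj.
rewrite ler_wpM2l ?mulr_ge0 ?sqrtr_ge0 // ler_sqrt // (le_trans _ hM) //.
exact: mhatQ_ge0.
Qed.
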